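(* Let $p$ be a prime and let $G$ be a group of order $p^7$ and nilpotency class $4$ with $|\gamma_2(G)| = p^5$. Then $\gamma_2(G)$ is abelian.
   Context: $\gamma_2(G)$ denotes the commutator subgroup of $G$. *)

From mathcomp Require Import all_boot all_fingroup all_solvable.

From mathcomp Require Import all_boot all_fingroup all_solvable.

Set Implicit Arguments.
Unset Strict Implicit.
Unset Printing Implicit Defensive.

Local Open Scope group_scope.

(* Since |G : G'| = p^2 and G' lies in the Frattini subgroup, G is generated
   by two elements x and y.  Modulo 'L_3(G) the group has class 2, so
   G' / 'L_3(G) is cyclic, generated by the image of [x, y].  By the three
   subgroup lemma [G', 'L_3(G)] lies in 'L_5(G) = 1, i.e. 'L_3(G) is central
   in G'; a group that is cyclic modulo a central subgroup is abelian. *)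

Section TwoGeneratedClassFour.
Variable gT : finGroupType.
Implicit Types (G H K : {group gT}) (x y : gT).

Lemma Phi_quotient_supplement K H G :
  K \subset 'Phi(G) -> G \subset 'N(K) -> H \subset G ->
  H / K = G / K -> H :=: G.
Proof.
move=> sKPhi nKG sHG eqHG.
have sKG := subset_trans sKPhi (Phi_sub G).
have defKH : K <*> H = G.
  rewrite -quotientYK ?(subset_trans sHG) // eqHG quotientYK //.
  exact/joing_idPr.
rewrite -(genGid H); apply: Phi_nongen; apply/eqP.
by rewrite eqEsubset join_subG Phi_sub sHG -{1}defKH genS ?setSU.
Qed.

Lemma commg_der1_lcn3 G : [~: G^`(1), 'L_3(G)] \subset 'L_5(G).
Proof.
have nL5G := lcn_norm 5 G.
have sRG : [~: G^`(1), 'L_3(G)] \subset G.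
  by rewrite (subset_trans (commgSS (der_sub 1 G) (lcn_sub 3 G))) ?commg_subl.
rewrite -quotient_sub1 ?(subset_trans sRG) // quotientR ?gFsub_trans //.
have qlcn n : 'L_n(G) / 'L_5(G) = 'L_n(G / 'L_5(G)) := morphim_lcn _ n nL5G.
have L5Q1 : 'L_5(G / 'L_5(G)) = 1 by rewrite -qlcn trivg_quotient.
rewrite quotient_der // qlcn subG1 /=; apply/eqP.
set Q := (G / 'L_5(G))%G in L5Q1 *.
apply: (three_subgroup (H := 'L_3(Q))); first rewrite (commGC Q); exact: L5Q1.
Qed.

Lemma lcn3_sub_center_der1 G : 'L_5(G) = 1 -> 'L_3(G) \subset 'Z(G^`(1)).
Proof.
move=> L5G1; rewrite subsetI (@lcn_sub_leq _ 3 2 G) //= centsC; apply/commG1P.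
by apply/trivgP; rewrite -L5G1 commg_der1_lcn3.
Qed.

Lemma cyclic_der1_quotient_lcn3 x y G :
  <[x]> <*> <[y]> :=: G -> cyclic (G^`(1) / 'L_3(G)).
Proof.
move=> defG; have nL3G := lcn_norm 3 G.
have [Gx Gy] : x \in G /\ y \in G.
  by rewrite -defG !mem_gen ?inE ?cycle_id ?orbT.
have defQ : <[coset 'L_3(G) x]> <*> <[coset 'L_3(G) y]> = G / 'L_3(G).
  have [nLx nLy] := (subsetP nL3G x Gx, subsetP nL3G y Gy).
  by rewrite -!quotient_cycle // -quotientY ?cycle_subG // defG.
rewrite quotient_der // -defQ der1_joing_cycles ?cycle_cyclic // defQ.
have : [~ coset 'L_3(G) x, coset 'L_3(G) y] \in (G / 'L_3(G))^`(1).
  by rewrite mem_commg ?mem_quotient.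
by rewrite -quotient_der // => /(subsetP (lcn_central 2 G))/setIP[].
Qed.

Lemma abelian_der1_joing_cycles x y G :
  <[x]> <*> <[y]> :=: G -> 'L_5(G) = 1 -> abelian G^`(1).
Proof.
move=> defG /lcn3_sub_center_der1 sL3Z.
exact: cyclic_factor_abelian sL3Z (cyclic_der1_quotient_lcn3 defG).
Qed.

Lemma card_p2group_joing_cycles p G : prime p -> #|G| = (p ^ 2)%N ->
  exists2 u, u \in G & exists2 v, v \in G & <[u]> <*> <[v]> :=: G.
Proof.
move=> pr_p oG; have p_gt1 := prime_gt1 pr_p.
have [[u defG] | ncycG] := altP (@cyclicP _ G).
  by exists u; [|exists 1]; rewrite ?group1 ?cycle1 ?joingG1 ?defG ?cycle_id.
have ntG : G :!=: 1 by rewrite -cardG_gt1 oG (ltn_exp2l 0).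
have [u Gu ntu] := trivgPn _ ntG.
have sUG : <[u]> \subset G by rewrite cycle_subG.
have /properP[_ [v Gv notUv]] : <[u]> \proper G.
  rewrite properEneq sUG andbT.
  by apply: contraNneq ncycG => <-; exact: cycle_cyclic.
exists u => //; exists v => //; set J := <[u]> <*> <[v]>.
have sJG : J \subset G by rewrite join_subG sUG cycle_subG.
have ltUJ : #|<[u]>| < #|J|.
  apply/proper_card/properP; split; first exact: joing_subl.
  by exists v => //; rewrite mem_gen // inE cycle_id orbT.
apply/eqP; rewrite eqEcard sJG oG.
have /(dvdn_pfactor _ _ pr_p)[a _ oU] : #|<[u]>| %| p ^ 2 by rewrite -oG cardSg.
have /(dvdn_pfactor _ _ pr_p)[b _ oJ] : #|J| %| p ^ 2 by rewrite -oG cardSg.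
have a_gt0 : 0 < a by rewrite -(ltn_exp2l 0 _ p_gt1) -oU cardG_gt1 cycle_eq1.
rewrite oU oJ ltn_exp2l // in ltUJ.
by rewrite oJ leq_exp2l // (leq_trans _ ltUJ).
Qed.

End TwoGeneratedClassFour.

Lemma index_der1_p2_joing_cycles (gT : finGroupType) p (G : {group gT}) :
  prime p -> p.-group G -> #|G : G^`(1)| = (p ^ 2)%N ->
  exists x, exists y, <[x]> <*> <[y]> :=: G.
Proof.
move=> pr_p pG iG'; have nG'G := der_norm 1 G.
have /(card_p2group_joing_cycles pr_p)[u /morphimP[x Nx Gx ->]] :
    #|G / G^`(1)| = (p ^ 2)%N by rewrite card_quotient.
case=> v /morphimP[y Ny Gy ->] defQ; exists x, y.
apply: (Phi_quotient_supplement (K := G^`(1))) => //.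
- by rewrite (Phi_joing pG) joing_subl.
- by rewrite join_subG !cycle_subG Gx Gy.
by rewrite quotientY ?cycle_subG // !quotient_cycle.
Qed.

Theorem lemma2p10 (gT : finGroupType) (G : {group gT}) (p : nat) :
  prime p -> #|G| = (p ^ 7)%N -> nil_class G = 4%N ->
  #|[~: G, G]| = (p ^ 5)%N ->
  abelian [~: G, G].
Proof.
move=> pr_p oG clG oG'.
have pG : p.-group G by rewrite /pgroup oG pnatX pnat_id.
have L5G1 : 'L_5(G) = 1.
  by apply/(lcn_nil_classP 4 (pgroup_nil pG)); rewrite clG.
have iG' : #|G : G^`(1)| = (p ^ 2)%N.
  by rewrite -divgS ?der_sub // oG oG' -expnB ?prime_gt0.
have [x [y defG]] := index_der1_p2_joing_cycles pr_p pG iG'.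
exact: abelian_der1_joing_cycles defG L5G1.
Qed.
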